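(* Let $\ell$ be a finite linear order with $|\ell|\ge2$, $\mathscr T$ a Schröder tree on $\ell$ enriched with connected graphs, with root $r$ and $g=\bigvee\mathscr T$. Suppose that for every internal vertex $w\neq r$ of $\mathscr T$ the graph $g_{\ell_w}$ is $r_w$-regular. Then $$\phi_g(x,t)=\Big(\prod_{w\in\mathrm{Iv}(\mathscr T),\,w\neq r}\frac{\phi_{(a_w,g_w)}(x+tN_{rw},t)}{x-r_w+t(r_w+N_{rw})}\Big)\,\phi_{(a_r,g_r)}(x,t).$$
   Context: All graphs finite and simple. $\phi_g(x,t)=\det\big(xI-(A(g)-tD(g))\big)$ with $A$ adjacency and $D$ diagonal degree matrix. Generalized composition: for a segmented partition $\pi=(\ell_1,\dots,\ell_k)$ of $\ell$ (nonempty consecutive segments whose concatenation is $\ell$), graphs $g_{\ell_j}$ on $\ell_j$ and a graph $h$ on $\pi$, $\bigvee_h(g_{\ell_1},\dots,g_{\ell_k})$ has vertex set $\ell$ and edges those of the $g_{\ell_j}$ plus all $\{x,y\}$, $x\in\ell_i,y\in\ell_j$, $\{\ell_i,\ell_j\}\in E(h)$. Graph-enriched Schröder tree on $\ell$: rooted plane tree with leaves the elements of $\ell$ left to right, each internal vertex having at least two children, with a graph $g_v$ on $\pi_v=(\ell_{v_1},\dots,\ell_{v_k})$ for each internal $v$ (children $v_1,\dots,v_k$ left to right, $\ell_u$ the leaves below $u$); enriched with connected graphs means every $g_v$ is connected. $\bigvee$ of a leaf is the one-vertex graph and $\bigvee\mathscr T=\bigvee_{g_r}(\bigvee\mathscr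 T_{r_1},\dots,\bigvee\mathscr T_{r_k})$ ($\mathscr T_u$ subtree at $u$); $g_{\ell_u}=\bigvee\mathscr T_u$; $a_v=(g_{\ell_{v_1}},\dots,g_{\ell_{v_k}})$. For internal $v$, with $n_i=|\ell_{v_i}|$, $\rho_i=\mathrm{reg}(g_{\ell_{v_i}})$ and $N_i=\sum_{s:\{\ell_{v_s},\ell_{v_i}\}\in E(g_v)}n_s$: $A(a_v,g_v)$ is the $k\times k$ matrix with diagonal $\rho_i$ and $(i,j)$ entry ($i\neq j$) $\sqrt{n_in_j}$ if $\{\ell_{v_i},\ell_{v_j}\}\in E(g_v)$, else $0$; $D(a_v,g_v)=\mathrm{diag}(\rho_i+N_i)$; $\phi_{(a_v,g_v)}(x,t)=\det\big(xI_k-(A(a_v,g_v)-tD(a_v,g_v))\big)$. For non-root internal $w$ with parent $u$, $N_w=\sum_{x:\{\ell_x,\ell_w\}\in E(g_u)}|\ell_x|$, and $N_{rw}=N_{w_1}+\cdots+N_{w_m}$ along the path $r=w_0,w_1,\dots,w_m=w$. *)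

From HB Require Import structures.
From mathcomp Require Import all_boot all_order all_algebra.
Set Implicit Arguments. Unset Strict Implicit. Unset Printing Implicit Defensive.
Import Order.TTheory GRing.Theory Num.Theory.

(* Plane rooted trees whose internal vertices carry a graph on their children.
   [Node cs e]: children cs (left to right), graph e on the child indices
   0..size cs - 1 (only values e i j with i,j < size cs matter).
   Leaves are numbered 0..nleaves-1 from left to right; the underlying linear
   order l is identified with 'I_(nleaves T). *)
Inductive stree : Type :=
| Leaf : stree
| Node : seq stree -> (nat -> nat -> bool) -> stree.

Fixpoint nleaves (t : stree) : nat :=
  match t with
  | Leaf => 1
  | Node cs _ => sumn (map nleaves cs)
  end.

Definition simple_graph (k : nat) (e : nat -> nat -> bool) : bool :=
  [forall i : 'I_k, forall j : 'I_k, e i j == e j i] &&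
  [forall i : 'I_k, ~~ e i i].

Definition connected_graph (k : nat) (e : nat -> nat -> bool) : bool :=
  [forall i : 'I_k, forall j : 'I_k,
     connect (fun a b : 'I_k => e a b) i j].

Fixpoint wf (t : stree) : bool :=
  match t with
  | Leaf => true
  | Node cs e =>
      [&& 2 <= size cs, simple_graph (size cs) e,
          connected_graph (size cs) e & all wf cs]
  end.

Definition children (t : stree) : seq stree :=
  if t is Node cs _ then cs else [::].
Definition cgraph (t : stree) : nat -> nat -> bool :=
  if t is Node _ e then e else (fun _ _ => false).

(* index of the block (child) containing leaf p, given the block sizes *)
Fixpoint blk_of (sz : seq nat) (p : nat) : nat :=
  match sz with
  | [::] => 0
  | s :: ss => if p < s then 0 else (blk_of ss (p - s)).+1
  end.

Definition blk_off (sz : seq nat) (i : nat) : nat := sumn (take i sz).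

(* adjacency of the generalized composition \bigvee T on the leaves *)
Fixpoint adjT (t : stree) : nat -> nat -> bool :=
  match t with
  | Leaf => fun _ _ => false
  | Node cs e =>
      let fs := map adjT cs in
      let sz := map nleaves cs in
      fun p q =>
        let bp := blk_of sz p in
        let bq := blk_of sz q in
        if bp == bq then
          nth (fun _ _ => false) fs bp (p - blk_off sz bp) (q - blk_off sz bp)
        else e bp bq
  end.

Definition deg (t : stree) (p : nat) : nat :=
  \sum_(j < nleaves t) adjT t p j.

Definition regular (t : stree) : bool :=
  [forall i : 'I_(nleaves t), forall j : 'I_(nleaves t), deg t i == deg t j].

(* reg(\bigvee t): the common degree (degree of the first leaf) *)
Definition reg (t : stree) : nat := deg t 0.

Fixpoint subtree (t : stree) (a : seq nat) : stree :=
  match a with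
  | [::] => t
  | i :: a' => subtree (nth Leaf (children t) i) a'
  end.

(* addresses of the internal vertices Iv(T); [::] is the root *)
Fixpoint Iv (t : stree) : seq (seq nat) :=
  match t with
  | Leaf => [::]
  | Node cs _ =>
      [::] :: (fix aux (i : nat) (l : seq stree) : seq (seq nat) :=
                 match l with
                 | [::] => [::]
                 | c :: l' => [seq i :: a | a <- Iv c] ++ aux i.+1 l'
                 end) 0 cs
  end.

Section Spectral.
Variable R : rcfType.
Local Open Scope ring_scope.

Definition phi_mat (n : nat) (A D : 'M[R]_n) (x t : R) : R :=
  \det (x%:M - (A - t *: D)).

Definition gA (T : stree) : 'M[R]_(nleaves T) :=
  \matrix_(i, j) (adjT T i j)%:R.
Definition gD (T : stree) : 'M[R]_(nleaves T) :=
  \matrix_(i, j) (if i == j then (deg T i)%:R else 0).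
Definition phi_g (T : stree) (x t : R) : R := phi_mat (gA T) (gD T) x t.

Definition Nchild (v : stree) (i : nat) : nat :=
  \sum_(s < size (children v) | cgraph v s i) nleaves (nth Leaf (children v) s).

Definition nodeA (v : stree) : 'M[R]_(size (children v)) :=
  \matrix_(i, j)
    (if i == j then (reg (nth Leaf (children v) i))%:R
     else if cgraph v i j then
       Num.sqrt ((nleaves (nth Leaf (children v) i) *
                  nleaves (nth Leaf (children v) j))%:R)
     else 0).
Definition nodeD (v : stree) : 'M[R]_(size (children v)) :=
  \matrix_(i, j)
    (if i == j then (reg (nth Leaf (children v) i) + Nchild v i)%:R else 0).
Definition phi_node (v : stree) (x t : R) : R := phi_mat (nodeA v) (nodeD v) x t.

End Spectral.

Definition N_path (T : stree) (a : seq nat) : nat :=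
  \sum_(k < size a) Nchild (subtree T (take k a)) (nth 0 a k).

(* At an internal vertex with children c_1, ..., c_k, order the leaves block by block.
   As a matrix of polynomials in x, xI - (A - tD) is then X - U W, where X is block
   diagonal with X_i the characteristic matrix of A(c_i) - t (D(c_i) + N_i I), U is the
   block indicator matrix and W the adjacency of g_v between blocks.  As c_i is
   r_i-regular, the all-ones vector of block i is an eigenvector: X U = U diag (x - e_i)
   with e_i = r_i - t (r_i + N_i).  A Schur complement computation gives
   det (X - U W) det D = det X det (D - W U), and D - W U is conjugate, through
   diag (sqrt n_i), to the matrix defining phi_(a_v, g_v).  Hence
   phi_g = prod_i q_i(x) phi_(a_v, g_v) with q_i = det X_i / (x - e_i), and since
   det X_i(x) = phi_(c_i)(x + t N_i, t), induction expands q_i into the factors of the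
   subtree at c_i, the one at c_i itself having denominator x - e_i. *)

From HB Require Import structures.
From mathcomp Require Import all_boot all_order all_algebra.
From mathcomp Require Import ring.
Import Order.TTheory GRing.Theory Num.Theory.
Local Open Scope ring_scope.
Set Implicit Arguments. Unset Strict Implicit. Unset Printing Implicit Defensive.

Lemma det_sub_mulmx_intertwined (V : comNzRingType) n k (X : 'M[V]_n)
    (U : 'M[V]_(n, k)) (W : 'M[V]_(k, n)) (D : 'M[V]_k) :
  X *m U = U *m D -> \det (X - U *m W) * \det D = \det X * \det (D - W *m U).
Proof.
move=> XU; pose Z := block_mx X U W 1%:M.
have detZ : \det Z = \det (X - U *m W).
  have := det_mulmx (block_mx 1%:M (- U) 0 1%:M) Z.
  rewrite mulmx_block !mul1mx !mul0mx !add0r mulNmx mulmx1 addrN.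
  by rewrite det_ublock det_lblock !det1 !mul1r mulr1 => <-.
have := det_mulmx Z (block_mx 1%:M (- U) 0 D).
rewrite mulmx_block !mulmx1 !mulmx0 !addr0 !mulmxN XU addNr mul1mx addrC.
by rewrite det_lblock det_ublock det1 mul1r detZ => ->.
Qed.

Lemma blk_off_cons s sz i : blk_off (s :: sz) i.+1 = (s + blk_off sz i)%N.
Proof. by []. Qed.

Lemma blk_of_off sz i b : (b < nth 0 sz i)%N -> blk_of sz (blk_off sz i + b) = i.
Proof.
elim: sz i => [|s sz IH] [|i] //= ltb; first by rewrite ltb.
by rewrite blk_off_cons -addnA ltnNge leq_addr /= addKn IH.
Qed.

Lemma blk_ofP sz p : (p < sumn sz)%N ->
  [/\ (blk_of sz p < size sz)%N, (blk_off sz (blk_of sz p) <= p)%N &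
      (p - blk_off sz (blk_of sz p) < nth 0 sz (blk_of sz p))%N].
Proof.
elim: sz p => [|s sz IH] p //= ltp; case: (ltnP p s) => [ltps|lesp]; first by rewrite subn0.
have [] := IH (p - s)%N; first by rewrite ltn_subLR.
by rewrite blk_off_cons subnDA -leq_subRL.
Qed.

Lemma big_blocks (V : Type) (idx : V) (op : Monoid.law idx) sz (G : nat -> V) :
  \big[op/idx]_(q < sumn sz) G q =
  \big[op/idx]_(0 <= i < size sz) \big[op/idx]_(b < nth 0 sz i) G (blk_off sz i + b)%N.
Proof.
elim: sz G => [|s sz IH] G /=; first by rewrite big_ord0 big_geq.
rewrite big_split_ord big_nat_recl // (IH (fun q => G (s + q)%N)).
by congr (op _ _); apply: eq_bigr => i _; apply: eq_bigr => b _; rewrite addnA.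
Qed.

Definition blockdiag_entry (V : nmodType) sz (F : nat -> nat -> nat -> V) (p q : nat) : V :=
  let i := blk_of sz p in
  if i == blk_of sz q then F i (p - blk_off sz i)%N (q - blk_off sz i)%N else 0.

Lemma det_blockdiag (V : comNzRingType) sz (F : nat -> nat -> nat -> V) :
  \det (\matrix_(p, q < sumn sz) blockdiag_entry sz F p q) =
  \prod_(0 <= i < size sz) \det (\matrix_(a, b < nth 0 sz i) F i a b).
Proof.
elim: sz F => [|s sz IH] F /=; first by rewrite big_geq // det_mx00.
rewrite big_nat_recl // -(IH (fun i => F i.+1)) -(det_ublock _ 0); congr (\det _).
apply/matrixP => p q.
case: (split_ordP p) => {}p ->; case: (split_ordP q) => {}q ->;
  rewrite ?block_mxEul ?block_mxEur ?block_mxEdl ?block_mxEdr !mxE /blockdiag_entry /=.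
- by rewrite !ltn_ord !subn0.
- by rewrite ltn_ord ltnNge leq_addr.
- by rewrite ltn_ord ltnNge leq_addr.
- by rewrite !ltnNge !leq_addr /= !addKn eqSS; case: ifP => // _; rewrite !subnDl.
Qed.

Section StreeInd.
Variable P : stree -> Prop.
Hypothesis P_Leaf : P Leaf.
Hypothesis P_Node : forall cs e, (forall i, P (nth Leaf cs i)) -> P (Node cs e).

Fixpoint stree_nth_ind (t : stree) : P t :=
  match t with
  | Leaf => P_Leaf
  | Node cs e => P_Node e
      ((fix children_ind (l : seq stree) (i : nat) : P (nth Leaf l i) :=
          match l, i return P (nth Leaf l i) with
          | [::], 0 | [::], _.+1 => P_Leaf
          | c :: _, 0 => stree_nth_ind c
          | _ :: l', i'.+1 => children_ind l' i'
          end) cs)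
  end.
End StreeInd.

Lemma wf_child cs e i : wf (Node cs e) -> (i < size cs)%N -> wf (nth Leaf cs i).
Proof. by move=> /and4P [_ _ _ /all_nthP]; apply. Qed.

Lemma nleaves_gt0 t : wf t -> (0 < nleaves t)%N.
Proof.
elim/stree_nth_ind: t => // - [//|c cs] e IH /and4P [_ _ _ /andP [wfc _]].
exact: leq_trans (IH 0%N wfc) (leq_addr _ _).
Qed.

Lemma sumr_eqn_mul (V : pzSemiRingType) m a (y : V) : (a < m)%N ->
  \sum_(b < m) (a == b)%:R * y = y.
Proof.
move=> ltam; rewrite (bigD1 (Ordinal ltam)) //= eqxx mul1r big1 ?addr0 // => b.
by rewrite -val_eqE /= eq_sym => /negbTE ->; rewrite mul0r.
Qed.

Lemma phi_mat_char_poly (R : rcfType) n (A D : 'M[R]_n) x t :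
  phi_mat A D x t = (char_poly (A - t *: D)).[x].
Proof.
rewrite /char_poly -horner_evalE -det_map_mx /phi_mat; congr (\det _).
apply/matrixP => a b; rewrite !mxE rmorphB rmorphMn /= !horner_evalE hornerX hornerC.
by case: (a == b); rewrite ?mulr1n ?mulr0n ?hornerE.
Qed.

Section NodeDecomposition.
Variables (R : rcfType) (t : R) (cs : seq stree) (e : nat -> nat -> bool).
Local Notation T := (Node cs e).
Local Notation k := (size cs).
Local Notation sz := (map nleaves cs).
Local Notation child i := (nth Leaf cs i).
Local Notation blk := (blk_of sz).
Local Notation off := (blk_off sz).
Hypothesis wfT : wf T.
Hypothesis child_regular : forall i, (i < k)%N -> regular (child i).

Lemma edge_sym i j : (i < k)%N -> (j < k)%N -> e i j = e j i.
Proof.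
move: wfT => /= /and4P [_ /andP [/forallP sym _] _ _] ltik ltjk.
exact/eqP/(forallP (sym (Ordinal ltik)) (Ordinal ltjk)).
Qed.

Lemma edge_irr i : (i < k)%N -> e i i = false.
Proof.
move: wfT => /= /and4P [_ /andP [_ /forallP irr] _ _] ltik.
exact/negbTE/(irr (Ordinal ltik)).
Qed.

Lemma NchildE i : (i < k)%N ->
  Nchild T i = (\sum_(j < k) e i j * nleaves (child j))%N.
Proof.
move=> ltik; rewrite /Nchild big_mkcond; apply: eq_bigr => j _ /=.
by rewrite (edge_sym ltik (ltn_ord j)); case: (e j i); rewrite ?mul1n.
Qed.

Lemma adjT_nodeE p q : (p < nleaves T)%N ->
  adjT T p q = if blk p == blk q then adjT (child (blk p)) (p - off (blk p)) (q - off (blk p))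
               else e (blk p) (blk q).
Proof.
move=> ltp; have [ltbk _ _] := @blk_ofP sz p ltp; rewrite size_map in ltbk.
by rewrite /=; case: ifP => // _; rewrite (nth_map Leaf).
Qed.

Lemma deg_nodeE p : (p < nleaves T)%N ->
  deg T p = (deg (child (blk p)) (p - off (blk p)) + Nchild T (blk p))%N.
Proof.
move=> ltp; have [ltbk _ _] := @blk_ofP sz p ltp; rewrite size_map in ltbk.
have block_sum j : (j < k)%N ->
    (\sum_(b < nth 0 sz j) adjT T p (off j + b))%N =
    (if blk p == j then deg (child j) (p - off j) else e (blk p) j * nleaves (child j))%N.
  move=> ltjk; under eq_bigr => b _ do rewrite (adjT_nodeE _ ltp) (blk_of_off (ltn_ord b)).
  rewrite (nth_map Leaf) //; case: eqP => [<-|_]; last by rewrite sum_nat_const card_ord mulnC.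
  by under eq_bigr => b _ do rewrite addKn.
rewrite /deg (big_blocks _ sz (fun q => nat_of_bool (adjT T p q))).
rewrite size_map big_mkord (NchildE ltbk).
under eq_bigr => j _ do rewrite block_sum //.
rewrite (bigD1 (Ordinal ltbk)) //= eqxx [in RHS](bigD1 (Ordinal ltbk)) //= edge_irr //.
congr (_ + _); apply: eq_bigr => j.
by rewrite -val_eqE /= eq_sym => /negbTE ->.
Qed.

Lemma deg_child i a : (i < k)%N -> (a < nleaves (child i))%N ->
  deg (child i) a = reg (child i).
Proof.
move=> ltik lta; have lt0 : (0 < nleaves (child i))%N by apply: leq_ltn_trans lta.
exact/eqP/(forallP (forallP (child_regular ltik) (Ordinal lta)) (Ordinal lt0)).
Qed.

(* entries of the characteristic matrix of A(c_i) - t (D(c_i) + N_i I) *)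
Definition block_entry i a b : {poly R} :=
  (a == b)%:R * 'X - ((adjT (child i) a b)%:R
                      - (a == b)%:R * (t * (deg (child i) a + Nchild T i)%:R))%:P.
Definition eig i : R := (reg (child i))%:R - t * (reg (child i) + Nchild T i)%:R.

Definition block_charmx i : 'M[{poly R}]_(nleaves (child i)) :=
  \matrix_(a, b) block_entry i a b.
Definition blockdiag_charmx : 'M[{poly R}]_(nleaves T) :=
  \matrix_(p, q) blockdiag_entry sz block_entry p q.
Definition block_indicator : 'M[{poly R}]_(nleaves T, k) :=
  \matrix_(p, i) (blk p == i)%:R.
Definition block_adjmx : 'M[{poly R}]_(k, nleaves T) :=
  \matrix_(i, q) (e i (blk q))%:R%:P.
Definition eig_diagmx : 'M[{poly R}]_k := diag_mx (\row_i ('X - (eig i)%:P)).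

Lemma block_indicator_adjmxE (p q : 'I_(nleaves T)) :
  (block_indicator *m block_adjmx) p q = (e (blk p) (blk q))%:R%:P.
Proof.
have [ltbk _ _] := @blk_ofP sz p (ltn_ord p); rewrite size_map in ltbk.
rewrite !mxE (bigD1 (Ordinal ltbk)) //= big1 ?addr0 => [|j]; first by rewrite !mxE eqxx mul1r.
by rewrite !mxE -val_eqE /= eq_sym => /negbTE ->; rewrite mul0r.
Qed.

Lemma char_poly_mx_node :
  char_poly_mx (gA R T - t *: gD R T) = blockdiag_charmx - block_indicator *m block_adjmx.
Proof.
apply/matrixP => p q.
rewrite [in RHS]mxE [X in _ = _ + X]mxE block_indicator_adjmxE !mxE /blockdiag_entry.
have ltp := ltn_ord p; have [ltbk lep _] := @blk_ofP sz p ltp; rewrite size_map in ltbk.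
rewrite (adjT_nodeE _ ltp) (deg_nodeE ltp).
have [eqb|neqb] := eqVneq (blk p) (blk q); last first.
  have -> : (p == q) = false by apply: contraNF neqb => /eqP ->.
  by rewrite mulr0n mulr0 subr0 sub0r.
have leq : (off (blk p) <= q)%N by rewrite eqb; case: (@blk_ofP sz q (ltn_ord q)).
have -> : (p == q) = (p - off (blk p) == q - off (blk p))%N.
  by rewrite -val_eqE /= -[RHS](eqn_add2l (off (blk p))) !subnKC.
rewrite -eqb edge_irr // /block_entry.
by case: (_ == _); rewrite ?mulr1n ?mulr0n ?mul1r ?mul0r ?polyC0 ?mulr0 ?subr0.
Qed.

Lemma block_entry_row_sum i a : (i < k)%N -> (a < nleaves (child i))%N ->
  \sum_(b < nleaves (child i)) block_entry i a b = 'X - (eig i)%:P.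
Proof.
move=> ltik lta; rewrite /block_entry sumrB sumr_eqn_mul // -(rmorph_sum polyC) sumrB.
rewrite sumr_eqn_mul // -(natr_sum _ _ _ (fun b : 'I__ => nat_of_bool (adjT (child i) a b))).
by rewrite -/(deg (child i) a) (deg_child ltik lta).
Qed.

Lemma blockdiag_charmx_indicator :
  blockdiag_charmx *m block_indicator = block_indicator *m eig_diagmx.
Proof.
apply/matrixP => p i; rewrite mul_mx_diag !mxE.
under eq_bigr => q _ do rewrite !mxE.
rewrite (big_blocks _ sz (fun q => blockdiag_entry sz block_entry p q * (blk q == i)%:R)).
rewrite size_map big_mkord (bigD1 i) //= [X in _ + X]big1 ?addr0 => [|j neqji]; last first.
  apply: big1 => b _; rewrite (blk_of_off (ltn_ord b)).
  by rewrite (_ : (j == i :> nat) = false) ?mulr0 //; apply/negbTE.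
have [ltbk lep ltpb] := @blk_ofP sz p (ltn_ord p).
under eq_bigr => b _ do
  rewrite (blk_of_off (ltn_ord b)) eqxx mulr1 /blockdiag_entry (blk_of_off (ltn_ord b)).
case: eqP => [eqbi|_]; last by rewrite big1_eq mul0r.
rewrite eqbi (nth_map Leaf) //; under eq_bigr => b _ do rewrite addKn.
by rewrite block_entry_row_sum ?mul1r //; move: ltpb; rewrite eqbi (nth_map Leaf).
Qed.

Lemma block_adjmx_indicator :
  block_adjmx *m block_indicator = \matrix_(i, j) (e i j * nleaves (child j))%:R%:P.
Proof.
apply/matrixP => i j; rewrite !mxE; under eq_bigr => q _ do rewrite !mxE.
rewrite (big_blocks _ sz (fun q => (e i (blk q))%:R%:P * (blk q == j)%:R)).
rewrite size_map big_mkord (bigD1 j) //= [X in _ + X]big1 ?addr0 => [|j' neqj'j]; last first.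
  apply: big1 => b _; rewrite (blk_of_off (ltn_ord b)).
  by rewrite (_ : (j' == j :> nat) = false) ?mulr0 //; apply/negbTE.
under eq_bigr => b _ do rewrite (blk_of_off (ltn_ord b)) eqxx mulr1.
by rewrite sumr_const card_ord (nth_map Leaf) // -rmorphMn -mulr_natr -natrM.
Qed.

Lemma det_blockdiag_charmx : \det blockdiag_charmx = \prod_(i < k) \det (block_charmx i).
Proof.
rewrite /blockdiag_charmx [nleaves T]/= det_blockdiag size_map big_mkord.
apply: eq_bigr => i _; rewrite /block_charmx.
by case: _ / (nth_map Leaf 0%N nleaves (ltn_ord i)).
Qed.

Lemma child_nleaves_gt0 i : (i < k)%N -> (0 < nleaves (child i))%N.
Proof. by move=> ltik; apply/nleaves_gt0/(wf_child wfT). Qed.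

Lemma root_det_block_charmx i : (i < k)%N -> root (\det (block_charmx i)) (eig i).
Proof.
move=> ltik; rewrite /root -horner_evalE -det_map_mx -det_tr; apply/det0P.
exists (const_mx 1).
  apply/negP => /eqP/matrixP/(_ 0 (Ordinal (child_nleaves_gt0 ltik))).
  by rewrite !mxE; apply/eqP/oner_neq0.
apply/matrixP => z b; rewrite !mxE; under eq_bigr => a _ do rewrite !mxE mul1r.
rewrite -(rmorph_sum (horner_eval (eig i))) block_entry_row_sum //.
by change (('X - (eig i)%:P).[eig i] = 0); rewrite hornerXsubC subrr.
Qed.

Lemma horner_det_block_charmx i x :
  (\det (block_charmx i)).[x] = phi_g (child i) (x + t * (Nchild T i)%:R) t.
Proof.
rewrite -horner_evalE -det_map_mx /phi_g /phi_mat; congr (\det _); apply/matrixP => a b.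
rewrite !mxE /block_entry /= /horner_eval !(hornerE, hornerMn) -[nat_of_ord a == b]/(a == b).
by case: eqP => _ /=; rewrite ?mulr1n ?mulr0n ?natrD ?hornerE; ring.
Qed.

Lemma horner_det_quotient x :
  (\det (eig_diagmx - block_adjmx *m block_indicator)).[x] = phi_node T x t.
Proof.
rewrite block_adjmx_indicator -horner_evalE -det_map_mx /phi_node /phi_mat.
set Y := map_mx _ _.
pose sq i : R := Num.sqrt (nleaves (child i))%:R.
have sq_neq0 (i : 'I_k) : sq i != 0.
  by rewrite lt0r_neq0 // sqrtr_gt0 ltr0n child_nleaves_gt0.
(* conjugation by diag (sqrt n_i) symmetrizes the weights e_ij n_j into e_ij sqrt (n_i n_j) *)
have -> : x%:M - (nodeA R T - t *: nodeD R T) =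
          diag_mx (\row_i sq i) *m Y *m diag_mx (\row_i (sq i)^-1).
  rewrite mul_mx_diag mul_diag_mx; apply/matrixP => i j; rewrite !mxE /=.
  have [<-|neqij] := eqVneq i j.
    rewrite /horner_eval edge_irr // mul0n !mulr1n !(hornerE, hornerMn) /eig.
    by field.
  rewrite !mulr0n /horner_eval !(hornerE, hornerMn).
  case: (e i j) => /=; last by rewrite mul0n mulr0n !(subr0, oppr0, mulr0, mul0r).
  rewrite !natrM mulr1n mul1r sqrtrM ?ler0n // -[(nleaves _)%:R in RHS]sqr_sqrtr ?ler0n //.
  by rewrite -/(sq i) -/(sq j); field.
rewrite !det_mulmx !det_diag mulrAC -big_split /= big1 ?mul1r // => i _.
by rewrite !mxE mulfV.
Qed.

Definition block_quot i : {poly R} := \det (block_charmx i) %/ ('X - (eig i)%:P).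

Lemma block_quotK i : (i < k)%N -> block_quot i * ('X - (eig i)%:P) = \det (block_charmx i).
Proof. by move=> ltik; rewrite divpK // dvdp_XsubCl root_det_block_charmx. Qed.

Lemma char_poly_node :
  char_poly (gA R T - t *: gD R T) =
  \prod_(i < k) block_quot i * \det (eig_diagmx - block_adjmx *m block_indicator).
Proof.
have := det_sub_mulmx_intertwined block_adjmx blockdiag_charmx_indicator.
rewrite /char_poly char_poly_mx_node det_blockdiag_charmx det_diag.
have -> : \prod_(i < k) \det (block_charmx i) =
          \prod_(i < k) block_quot i * \prod_(i < k) ('X - (eig i)%:P).
  by rewrite -big_split; apply: eq_bigr => i _ /=; rewrite block_quotK.
under eq_bigr => i _ do rewrite mxE.
rewrite mulrAC => /mulIf; apply.
by apply/prodf_neq0 => i _; rewrite polyXsubC_eq0.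
Qed.

Lemma phi_g_node x : phi_g T x t = \prod_(i < k) (block_quot i).[x] * phi_node T x t.
Proof.
by rewrite /phi_g phi_mat_char_poly char_poly_node hornerM horner_prod horner_det_quotient.
Qed.

Lemma horner_block_quot i x : (i < k)%N ->
  phi_g (child i) (x + t * (Nchild T i)%:R) t = (x - eig i) * (block_quot i).[x].
Proof.
by move=> ltik; rewrite -horner_det_block_charmx -block_quotK // hornerM hornerXsubC mulrC.
Qed.

Lemma block_quot_Leaf i : (i < k)%N -> child i = Leaf -> block_quot i = 1.
Proof.
move=> ltik leaf_i; apply: (mulIf (negbT (polyXsubC_eq0 (eig i)))).
rewrite mul1r block_quotK // /block_charmx.
case: _ / (esym leaf_i) => /=.
by rewrite det_mx11 mxE /block_entry /eig /reg /deg leaf_i /= big_ord1 !mul1r.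
Qed.
End NodeDecomposition.

(* the anonymous auxiliary fixpoint in the definition of [Iv] *)
Fixpoint Iv_children (i : nat) (l : seq stree) : seq (seq nat) :=
  if l is c :: l' then [seq i :: a | a <- Iv c] ++ Iv_children i.+1 l' else [::].

Lemma Iv_node cs e : Iv (Node cs e) = [::] :: Iv_children 0 cs.
Proof. by []. Qed.

Lemma Iv_children_neq_nil j cs a : a \in Iv_children j cs -> a != [::].
Proof.
elim: cs j => [|c cs IH] j //=; rewrite mem_cat => /orP [/mapP [b _ ->] //|].
exact: IH.
Qed.

Lemma mem_Iv_children j cs i a : (i < size cs)%N ->
  a \in Iv (nth Leaf cs i) -> ((j + i)%N :: a) \in Iv_children j cs.
Proof.
elim: cs j i => [|c cs IH] j [|i] //= ltis mema; rewrite mem_cat.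
  by rewrite addn0 (map_f (cons j) mema).
by rewrite -addSnnS (IH j.+1 i) ?orbT.
Qed.

Lemma mem_Iv_cons cs e i a : (i < size cs)%N ->
  a \in Iv (nth Leaf cs i) -> (i :: a) \in Iv (Node cs e).
Proof. by move=> ltis mema; rewrite Iv_node inE (mem_Iv_children 0 ltis mema) orbT. Qed.

Lemma big_Iv_children (V : Type) (idx : V) (op : Monoid.law idx) j cs (F : seq nat -> V) :
  \big[op/idx]_(a <- Iv_children j cs) F a =
  \big[op/idx]_(i < size cs) \big[op/idx]_(a <- Iv (nth Leaf cs i)) F ((j + i)%N :: a).
Proof.
elim: cs j => [|c cs IH] j /=; first by rewrite big_nil big_ord0.
rewrite big_cat big_map big_ord_recl /= addn0 IH.
by congr (op _ _); apply: eq_bigr => i _; rewrite addSnnS.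
Qed.

Lemma big_Iv_children_nonnil (V : Type) (idx : V) (op : Monoid.law idx) j cs
    (F : seq nat -> V) :
  \big[op/idx]_(a <- Iv_children j cs | a != [::]) F a =
  \big[op/idx]_(a <- Iv_children j cs) F a.
Proof.
rewrite big_seq_cond [RHS]big_seq; apply: eq_bigl => a.
by case: (boolP (a \in _)) => // /Iv_children_neq_nil ->.
Qed.

Lemma big_Iv_nonroot (V : Type) (idx : V) (op : Monoid.law idx) cs e (F : seq nat -> V) :
  \big[op/idx]_(a <- Iv (Node cs e) | a != [::]) F a =
  \big[op/idx]_(i < size cs) \big[op/idx]_(a <- Iv (nth Leaf cs i)) F ((i : nat) :: a).
Proof. by rewrite Iv_node big_cons eqxx big_Iv_children_nonnil big_Iv_children. Qed.

Lemma big_Iv_root (V : Type) (idx : V) (op : Monoid.law idx) cs e (F : seq nat -> V) :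
  \big[op/idx]_(a <- Iv (Node cs e)) F a =
  op (F [::]) (\big[op/idx]_(a <- Iv (Node cs e) | a != [::]) F a).
Proof. by rewrite Iv_node !big_cons eqxx big_Iv_children_nonnil. Qed.

Lemma N_path_cons T i a :
  N_path T (i :: a) = (Nchild T i + N_path (nth Leaf (children T) i) a)%N.
Proof. by rewrite /N_path /= big_ord_recl. Qed.

Lemma regular_Leaf : regular Leaf.
Proof. by apply/forallP => i; apply/forallP => j; rewrite /deg !big_ord1. Qed.

Section Factorization.
Variables (R : rcfType) (t : R).

Definition factor_num T x a : R := phi_node (subtree T a) (x + t * (N_path T a)%:R) t.
Definition factor_den T x a : R :=
  x - (reg (subtree T a))%:R + t * ((reg (subtree T a) + N_path T a)%N)%:R.

Lemma factor_num_cons cs e i a x :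
  factor_num (Node cs e) x (i :: a) =
  factor_num (nth Leaf cs i) (x + t * (Nchild (Node cs e) i)%:R) a.
Proof. by rewrite /factor_num N_path_cons natrD mulrDr addrA. Qed.

Lemma factor_den_cons cs e i a x :
  factor_den (Node cs e) x (i :: a) =
  factor_den (nth Leaf cs i) (x + t * (Nchild (Node cs e) i)%:R) a.
Proof. by rewrite /factor_den N_path_cons /= !natrD; ring. Qed.

Lemma factor_den_child cs e i x :
  factor_den (Node cs e) x [:: i] = x - eig t cs e i.
Proof. by rewrite /factor_den N_path_cons /N_path big_ord0 addn0 /eig !natrD; ring. Qed.

Lemma phi_g_factorization T x : T <> Leaf -> wf T ->
  (forall a, a \in Iv T -> a != [::] -> regular (subtree T a)) ->
  (forall a, a \in Iv T -> a != [::] -> factor_den T x a != 0) ->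
  phi_g T x t =
    (\prod_(a <- Iv T | a != [::]) (factor_num T x a / factor_den T x a)) * phi_node T x t.
Proof.
elim/stree_nth_ind: T x => // cs e IH x _ wfT sub_regular den_neq0.
have mem_child_root j cs' e' : (j < size cs)%N -> nth Leaf cs j = Node cs' e' ->
    [:: j] \in Iv (Node cs e).
  by move=> ltjs c_eq; apply: mem_Iv_cons; rewrite // c_eq Iv_node mem_head.
have child_regular j : (j < size cs)%N -> regular (nth Leaf cs j).
  move=> ltjs; case c_eq: (nth Leaf cs j) => [|cs' e']; first exact: regular_Leaf.
  by have := sub_regular [:: j] (mem_child_root _ _ _ ltjs c_eq); rewrite /= c_eq; apply.
rewrite (phi_g_node t wfT child_regular) big_Iv_nonroot; congr (_ * _).
apply: eq_bigr => i _; have ltis := ltn_ord i.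
under eq_bigr => a _ do rewrite factor_num_cons factor_den_cons.
case c_eq: (nth Leaf cs i) => [|cs' e']; first by rewrite block_quot_Leaf // big_nil hornerC.
set x' := x + _.
have den_root : factor_den (Node cs' e') x' [::] = x - eig t cs e i.
  by rewrite -c_eq -factor_den_cons factor_den_child.
have den_root_neq0 : x - eig t cs e i != 0.
  by rewrite -factor_den_child; apply: den_neq0 => //; apply: mem_child_root c_eq.
have := horner_block_quot t wfT child_regular x ltis; rewrite -/x' (IH i x') ?c_eq //.
- have num_root : factor_num (Node cs' e') x' [::] = phi_node (Node cs' e') x' t.
    by rewrite /factor_num /N_path big_ord0 mulr0 addr0.
  rewrite big_Iv_root den_root num_root /= => eq_q.
  by apply: (mulfI den_root_neq0); rewrite -eq_q; field.
- by rewrite -c_eq; apply: wf_child wfT ltis.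
- move=> a mema nila; have := sub_regular (val i :: a); rewrite /= c_eq; apply => //.
  by apply: mem_Iv_cons; rewrite ?c_eq.
- move=> a mema nila; rewrite -c_eq -factor_den_cons; apply: den_neq0 => //.
  by apply: mem_Iv_cons; rewrite ?c_eq.
Qed.
End Factorization.

Theorem mainTheorem10 (R : rcfType) (T : stree) (x t : R) :
  wf T -> (2 <= nleaves T)%N ->
  (forall a, a \in Iv T -> a != [::] -> regular (subtree T a)) ->
  (forall a, a \in Iv T -> a != [::] ->
     x - (reg (subtree T a))%:R + t * ((reg (subtree T a) + N_path T a)%N)%:R
       != 0) ->
  phi_g T x t =
    (\prod_(a <- Iv T | a != [::])
        (phi_node (subtree T a) (x + t * (N_path T a)%:R) t /
         (x - (reg (subtree T a))%:R
            + t * ((reg (subtree T a) + N_path T a)%N)%:R)))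
    * phi_node (subtree T [::]) x t.
Proof.
move=> wfT two_leaves; apply: phi_g_factorization wfT => T_Leaf.
by rewrite T_Leaf in two_leaves.
Qed.
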